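(* Let $S$ be a pomonoid and suppose $(Emb,\mathcal R)$ is a weak factorization system in $\mathbf{Pos}\text{-}S$, where $Emb$ is the class of order-embeddings. Then $\mathcal R\subseteq\mathcal{E_S}$, the class of split $S$-poset epimorphisms.
   Context: A pomonoid is a monoid with a compatible partial order; $\mathbf{Pos}\text{-}S$ is the category of (right) $S$-posets and action-preserving monotone maps. An order-embedding is an $S$-poset map $f$ with $f(a)\le f(a')\iff a\le a'$. A split $S$-poset epimorphism is an $S$-poset map $g:C\to D$ with an $S$-poset map $h:D\to C$, $gh=1_D$. A weak factorization system is a pair $(\mathcal L,\mathcal R)$ of morphism classes such that every morphism factors as an $\mathcal L$-morphism followed by an $\mathcal R$-morphism, $\mathcal R=\mathcal L^{\Box}$ and $\mathcal L={}^{\Box}\mathcal R$, where $\mathcal H^{\Box}$ (resp. ${}^{\Box}\mathcal H$) is the class of morphisms having the right (resp. left) lifting property with respect to all members of $\mathcal H$ (lifting: every commutative square has a diagonal making both triangles commute). *)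

Set Implicit Arguments.
Unset Strict Implicit.

Record Pomonoid := {
  pm_car :> Type;
  pm_le : pm_car -> pm_car -> Prop;
  pm_mul : pm_car -> pm_car -> pm_car;
  pm_one : pm_car;
  pm_le_refl : forall s, pm_le s s;
  pm_le_antisym : forall s t, pm_le s t -> pm_le t s -> s = t;
  pm_le_trans : forall s t u, pm_le s t -> pm_le t u -> pm_le s u;
  pm_mulA : forall s t u, pm_mul s (pm_mul t u) = pm_mul (pm_mul s t) u;
  pm_mul1l : forall s, pm_mul pm_one s = s;
  pm_mul1r : forall s, pm_mul s pm_one = s;
  pm_le_mull : forall s t u, pm_le s t -> pm_le (pm_mul u s) (pm_mul u t);
  pm_le_mulr : forall s t u, pm_le s t -> pm_le (pm_mul s u) (pm_mul t u)
}.

Record SPoset (S : Pomonoid) := {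
  sp_car :> Type;
  sp_le : sp_car -> sp_car -> Prop;
  sp_act : sp_car -> S -> sp_car;
  sp_le_refl : forall a, sp_le a a;
  sp_le_antisym : forall a b, sp_le a b -> sp_le b a -> a = b;
  sp_le_trans : forall a b c, sp_le a b -> sp_le b c -> sp_le a c;
  sp_act1 : forall a, sp_act a (@pm_one S) = a;
  sp_actM : forall a s t, sp_act (sp_act a s) t = sp_act a (@pm_mul S s t);
  sp_act_monol : forall a b s, sp_le a b -> sp_le (sp_act a s) (sp_act b s);
  sp_act_monor : forall a s t, @pm_le S s t -> sp_le (sp_act a s) (sp_act a t)
}.

Record SHom (S : Pomonoid) (A B : SPoset S) := {
  sh_fun :> A -> B;
  sh_mono : forall a a', @sp_le S A a a' -> @sp_le S B (sh_fun a) (sh_fun a');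
  sh_act : forall a s, sh_fun (@sp_act S A a s) = @sp_act S B (sh_fun a) s
}.

Definition MorClass (S : Pomonoid) := forall A B : SPoset S, SHom A B -> Prop.

Definition Emb (S : Pomonoid) : MorClass S :=
  fun A B f => forall a a', @sp_le S B (f a) (f a') <-> @sp_le S A a a'.

Definition SplitEpi (S : Pomonoid) : MorClass S :=
  fun C D g => exists h : SHom D C, forall d, g (h d) = d.

Definition LLP (S : Pomonoid) (A B C D : SPoset S)
  (f : SHom A B) (g : SHom C D) : Prop :=
  forall (u : SHom A C) (v : SHom B D),
    (forall a, g (u a) = v (f a)) ->
    exists d : SHom B C,
      (forall a, d (f a) = u a) /\ (forall b, g (d b) = v b).

Unset Implicit Arguments.
Definition rbox {S : Pomonoid} (H : MorClass S) : MorClass S :=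
  fun C D g => forall (A B : SPoset S) (f : SHom A B), H A B f -> @LLP S _ _ _ _ f g.

Definition lbox {S : Pomonoid} (H : MorClass S) : MorClass S :=
  fun A B f => forall (C D : SPoset S) (g : SHom C D), H C D g -> @LLP S _ _ _ _ f g.

Unset Implicit Arguments.

Definition WFS {S : Pomonoid} (L R : MorClass S) : Prop :=
  (forall (A B : SPoset S) (f : SHom A B),
      exists (C : SPoset S) (l : SHom A C) (r : SHom C B),
        L A C l /\ R C B r /\ forall a, r (l a) = f a)
  /\ (forall (A B : SPoset S) (g : SHom A B), R A B g <-> rbox L A B g)
  /\ (forall (A B : SPoset S) (f : SHom A B), L A B f <-> lbox R A B f).


Set Implicit Arguments.

(* The inclusion of the empty S-poset into D is an order-embedding, so every
   map in R lifts against it; lifting the square with the identity of D on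
   the bottom yields a section of the map. *)

Definition empty_SPoset (S : Pomonoid) : SPoset S.
Proof.
  refine (@Build_SPoset S Empty_set (fun _ _ => True) (fun a _ => a)
            _ _ _ _ _ _ _);
    intros; repeat match goal with a : Empty_set |- _ => destruct a end.
Defined.

Definition from_empty (S : Pomonoid) (B : SPoset S) : SHom (empty_SPoset S) B.
Proof.
  refine (@Build_SHom S (empty_SPoset S) B (fun a => match a with end) _ _);
    intros a; destruct a.
Defined.

Definition id_SHom (S : Pomonoid) (B : SPoset S) : SHom B B.
Proof.
  refine (@Build_SHom S B B (fun a => a) _ _); intros; auto.
Defined.

Lemma Emb_from_empty (S : Pomonoid) (B : SPoset S) : Emb (from_empty B).
Proof. intros a; destruct a. Qed.

Lemma LLP_from_empty_SplitEpi (S : Pomonoid) (C D : SPoset S) (g : SHom C D) :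
  LLP (from_empty D) g -> SplitEpi g.
Proof.
  intros Hlift.
  destruct (Hlift (from_empty C) (id_SHom D)) as [h [_ Hh]].
  - intros a; destruct a.
  - exists h; exact Hh.
Qed.

Lemma rbox_Emb_SplitEpi (S : Pomonoid) (C D : SPoset S) (g : SHom C D) :
  rbox (@Emb S) C D g -> SplitEpi g.
Proof.
  intros Hg.
  apply LLP_from_empty_SplitEpi, Hg, Emb_from_empty.
Qed.

Theorem mainTheorem4 (S : Pomonoid) (R : MorClass S) :
  WFS (@Emb S) R ->
  forall (C D : SPoset S) (g : SHom C D), R C D g -> SplitEpi g.
Proof.
  intros [_ [HR _]] C D g Hg.
  apply rbox_Emb_SplitEpi, HR, Hg.
Qed.
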